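(* Let $I\subset S=K[x_1,\dots,x_t]$ be a nonzero proper monomial ideal and let $f\in I$ be a homogeneous element with $\deg f=\alpha(I)$ such that $v(I^{n+1}:f^n)=\alpha(I)-1$ for all sufficiently large $n$. Then $v(I^{n+1})=(n+1)\alpha(I)-1$ for all sufficiently large $n$.
   Context: $K$ is a field and $S$ is standard graded. For a proper graded ideal $J$, the $v$-number is $v(J)=\min\{k\ge 0 : \exists g\in S_k,\ \mathcal P\in\operatorname{Ass}(S/J) \text{ with } (J:g)=\mathcal P\}$. $\alpha(I)=\min\{\deg g : g\in I\setminus\{0\} \text{ homogeneous}\}$. *)

From HB Require Import structures.
From mathcomp Require Import all_boot all_order all_algebra.
From mathcomp Require Import mpoly.
Set Implicit Arguments. Unset Strict Implicit. Unset Printing Implicit Defensive.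
Import GRing.Theory.
Local Open Scope ring_scope.

Section Defs.
Variables (K : fieldType) (t : nat).
Local Notation S := {mpoly K[t]}.

Definition is_ideal (J : S -> Prop) : Prop :=
  [/\ J 0, (forall a b, J a -> J b -> J (a + b)) & (forall r a, J a -> J (r * a))].

Definition is_proper_ideal (J : S -> Prop) : Prop := is_ideal J /\ ~ J 1.

Definition nonzero_ideal (J : S -> Prop) : Prop := exists a, J a /\ a != 0.

Definition ideal_gen (G : S -> Prop) : S -> Prop :=
  fun f => exists (gs rs : seq S), (forall g, g \in gs -> G g) /\
             f = \sum_(i < size gs) rs`_i * gs`_i.

Definition monomial_ideal (J : S -> Prop) : Prop :=
  is_ideal J /\
  (forall f, J f <-> ideal_gen (fun g => J g /\ exists m : 'X_{1..t}, g = 'X_[m]) f).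

Fixpoint ideal_pow (J : S -> Prop) (n : nat) : S -> Prop :=
  match n with
  | 0%N => fun _ => True
  | n'.+1 => ideal_gen (fun h => exists a b, ideal_pow J n' a /\ J b /\ h = a * b)
  end.

Definition colon (J : S -> Prop) (g : S) : S -> Prop := fun h => J (h * g).

Definition is_prime_ideal (P : S -> Prop) : Prop :=
  is_proper_ideal P /\ (forall a b, P (a * b) -> P a \/ P b).

Definition associated_prime (J P : S -> Prop) : Prop :=
  is_prime_ideal P /\ exists g : S, forall h, P h <-> colon J g h.

(* g is homogeneous of degree k for the standard grading (g in S_k; 0 included) *)
Definition homog_of_deg (k : nat) (g : S) : bool :=
  all (fun m : 'X_{1..t} => mdeg m == k) (msupp g).

Definition vnum_cand (J : S -> Prop) (k : nat) : Prop :=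
  exists g : S, homog_of_deg k g /\
    exists P, associated_prime J P /\ (forall h, colon J g h <-> P h).

Definition is_vnumber (J : S -> Prop) (k : nat) : Prop :=
  vnum_cand J k /\ (forall k', vnum_cand J k' -> (k <= k')%N).

Definition is_alpha (I : S -> Prop) (a : nat) : Prop :=
  (exists g, I g /\ g != 0 /\ homog_of_deg a g) /\
  (forall g d, I g -> g != 0 -> homog_of_deg d g -> (a <= d)%N).

End Defs.

From HB Require Import structures.
From mathcomp Require Import all_boot all_order all_algebra.
From mathcomp Require Import mpoly.
From mathcomp Require Import zify.
Set Implicit Arguments. Unset Strict Implicit. Unset Printing Implicit Defensive.
Import GRing.Theory.
Local Open Scope ring_scope.

(** If [g] is homogeneous of degree [a - 1] and [(I^(n+1) : f^n) : g] is an
    associated prime [P], then [I^(n+1) : g f^n = P] with [deg (g f^n) =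
    (n+1) a - 1], so [v(I^(n+1)) <= (n+1) a - 1].  Conversely, if
    [I^(n+1) : g = P] is prime, then [P] contains a power of a monomial of [I],
    hence a variable [x_i]; as [g <> 0] and every monomial of [I^(n+1)] has
    degree at least [(n+1) a], the product [x_i g] forces [deg g >= (n+1) a - 1]. *)

Section MonomialIdeals.
Variables (K : fieldType) (t : nat).
Local Notation S := {mpoly K[t]}.

Lemma homog_of_degE d (p : S) : homog_of_deg d p = (p \is d.-homog).
Proof. by rewrite dhomogE. Qed.

Lemma ideal_gen0 (G : S -> Prop) : ideal_gen G 0.
Proof. by exists [::], [::]; rewrite big_ord0. Qed.

Lemma ideal_gen_mul (G : S -> Prop) r y : G y -> ideal_gen G (r * y).
Proof.
move=> Gy; exists [:: y], [:: r]; split; last by rewrite big_ord1.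
by move=> g; rewrite inE => /eqP ->.
Qed.

Lemma ideal_pow0 (I : S -> Prop) k : ideal_pow I k 0.
Proof. by case: k => [|k] //=; apply: ideal_gen0. Qed.

Lemma ideal_powS_mul (I : S -> Prop) r p b k :
  ideal_pow I k p -> I b -> ideal_pow I k.+1 (r * (p * b)).
Proof. by move=> Ikp Ib; apply: ideal_gen_mul; exists p, b. Qed.

Lemma ideal_pow_exp (I : S -> Prop) b k : I b -> ideal_pow I k (b ^+ k).
Proof.
move=> Ib; elim: k => [|k IHk] //.
by rewrite -[b ^+ k.+1]mul1r exprSr; apply: ideal_powS_mul.
Qed.

Lemma colon_colon (J : S -> Prop) g h x : colon (colon J h) g x = colon J (g * h) x.
Proof. by rewrite /colon mulrA. Qed.

Lemma monomial_ideal_has_monomial (I : S -> Prop) :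
  monomial_ideal I -> nonzero_ideal I -> exists m : 'X_{1..t}, I 'X_[m].
Proof.
move=> [_ genI] [p [/genI [[|g gs] [rs [gensI ->]]] nz_p]].
  by rewrite big_ord0 eqxx in nz_p.
have [Ig [m gE]] := gensI g (mem_head g gs).
by exists m; rewrite -gE.
Qed.

Lemma prime_ideal_exp (P : S -> Prop) x k : is_prime_ideal P -> P (x ^+ k.+1) -> P x.
Proof.
move=> [_ primeP]; elim: k => [|k IHk]; first by rewrite expr1.
by rewrite exprS => /primeP [] // /IHk.
Qed.

Lemma prime_ideal_monomial_var (P : S -> Prop) (m : 'X_{1..t}) :
  is_prime_ideal P -> P 'X_[m] -> exists i : 'I_t, P 'X_i.
Proof.
move=> primeP; have [[_ P1] primeP'] := primeP; rewrite mpolyXE_id.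
elim: (index_enum _) => [|i r IHr]; first by rewrite big_nil.
rewrite big_cons => /primeP' [|//].
case: (m i) => [|k]; first by rewrite expr0.
by move/(prime_ideal_exp primeP); exists i.
Qed.

Lemma colon_prime_neq0 (J P : S -> Prop) g :
  is_proper_ideal P -> J 0 -> (forall h, colon J g h <-> P h) -> g != 0.
Proof.
move=> [_ P1] J0 colonP; apply/negP => /eqP g0; apply: P1.
by apply/colonP; rewrite /colon g0 mulr0.
Qed.

Definition mdeg_ge (k : nat) (p : S) : Prop :=
  forall m, m \in msupp p -> (k <= mdeg m)%N.

Lemma mdeg_ge0 k : mdeg_ge k 0.
Proof. by move=> m; rewrite msupp0. Qed.

Lemma mdeg_geD k p q : mdeg_ge k p -> mdeg_ge k q -> mdeg_ge k (p + q).
Proof. by move=> gep geq m /msuppD_le; rewrite mem_cat => /orP [/gep|/geq]. Qed.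

Lemma mdeg_geM j k p q : mdeg_ge j p -> mdeg_ge k q -> mdeg_ge (j + k) (p * q).
Proof.
move=> gep geq m /msuppM_le/allpairsP [[m1 m2] /= [m1p m2q ->]].
by rewrite mdegD leq_add ?gep ?geq.
Qed.

Lemma mdeg_ge_ideal_gen k (G : S -> Prop) p :
  (forall g, G g -> mdeg_ge k g) -> ideal_gen G p -> mdeg_ge k p.
Proof.
move=> geG [gs [rs [gensG ->]]].
apply: (big_ind (mdeg_ge k)); [exact: mdeg_ge0 | exact: mdeg_geD |].
move=> i _; rewrite -[k]add0n; apply: mdeg_geM => //.
by apply/geG/gensG/mem_nth.
Qed.

Lemma mdeg_ge_homog k d p : mdeg_ge k p -> p != 0 -> homog_of_deg d p -> (k <= d)%N.
Proof.
move=> gep nz_p; rewrite homog_of_degE => /dhomogP homp.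
case E: (msupp p) => [|m s]; first by rewrite -msupp_eq0 E in nz_p.
have mp : m \in msupp p by rewrite E mem_head.
by rewrite -(homp m mp) gep.
Qed.

Section InitialDegree.
Variables (I : S -> Prop) (a : nat).
Hypotheses (monoI : monomial_ideal I) (alphaI : is_alpha I a).

Lemma mdeg_ge_alpha p : I p -> mdeg_ge a p.
Proof.
have [[_ genI] [_ minI]] := (monoI, alphaI).
move/genI; apply: mdeg_ge_ideal_gen => g [Ig [m gE]] m'.
rewrite gE msuppX inE => /eqP ->; rewrite gE in Ig; apply: (minI _ _ Ig).
  by rewrite -msupp_eq0 msuppX.
by rewrite homog_of_degE dhomogX.
Qed.

Lemma mdeg_ge_ideal_pow k p : ideal_pow I k p -> mdeg_ge (k * a) p.
Proof.
elim: k p => [|k IHk] p /=; first by move=> _ m; rewrite mul0n.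
apply: mdeg_ge_ideal_gen => _ [x [y [Ikx [Iy ->]]]].
by rewrite mulSn addnC; apply: mdeg_geM; [apply: IHk | apply: mdeg_ge_alpha].
Qed.

Lemma vnum_cand_ideal_pow_ge k d :
  nonzero_ideal I -> vnum_cand (ideal_pow I k) d -> (k * a <= d.+1)%N.
Proof.
move=> nzI [g [homg [P [[primeP _] colonP]]]].
case: k colonP => [|k] colonP //.
have [m Im] := monomial_ideal_has_monomial monoI nzI.
have Pm : P ('X_[m] ^+ k.+1).
  apply/colonP; rewrite /colon mulrC exprSr.
  by apply: ideal_powS_mul; first exact: ideal_pow_exp.
have [i Pi] := prime_ideal_monomial_var primeP (prime_ideal_exp primeP Pm).
have nz_g := colon_prime_neq0 primeP.1 (ideal_pow0 I k.+1) colonP.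
have nz_Xi : ('X_i : S) != 0 by rewrite -msupp_eq0 msuppX.
apply: (mdeg_ge_homog (mdeg_ge_ideal_pow (proj2 (colonP _) Pi))).
  exact: mulf_neq0.
rewrite homog_of_degE -add1n; apply: dhomogM; last by rewrite -homog_of_degE.
by rewrite dhomogX; apply/eqP; apply: mdeg1.
Qed.

End InitialDegree.

Lemma vnum_cand_colon (J : S -> Prop) h k d :
  homog_of_deg d h -> vnum_cand (colon J h) k -> vnum_cand J (k + d).
Proof.
move=> homh [g [homg [P [[primeP _] colonP]]]].
have colonghP h' : colon J (g * h) h' <-> P h' by rewrite -colon_colon.
exists (g * h); split.
  by rewrite homog_of_degE; apply: dhomogM; rewrite -homog_of_degE.
exists P; split=> //; split=> //.
by exists (g * h) => h'; apply: iff_sym.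
Qed.

End MonomialIdeals.

Theorem corollary4p9 (K : fieldType) (t : nat) (I : {mpoly K[t]} -> Prop)
    (a : nat) (f : {mpoly K[t]}) :
  monomial_ideal I -> nonzero_ideal I -> is_proper_ideal I ->
  is_alpha I a ->
  I f -> f != 0 -> homog_of_deg a f ->
  (exists N : nat, forall n : nat, (N <= n)%N ->
     is_vnumber (colon (ideal_pow I n.+1) (f ^+ n)) (a - 1)) ->
  exists N : nat, forall n : nat, (N <= n)%N ->
     is_vnumber (ideal_pow I n.+1) (n.+1 * a - 1).
Proof.
move=> monoI nzI _ alphaI _ _ homf [N vnumN]; exists N => n /vnumN [candf _].
have homfn : homog_of_deg (a * n) (f ^+ n).
  by rewrite homog_of_degE; apply: dhomogMn; rewrite -homog_of_degE.
split.
  have -> : (n.+1 * a - 1 = (a - 1) + a * n)%N by rewrite mulSn [(a * n)%N]mulnC; nia.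
  exact: vnum_cand_colon homfn candf.
by move=> d /(vnum_cand_ideal_pow_ge monoI alphaI nzI); lia.
Qed.
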